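(* Let $(M,\|\cdot\|)$ be a normed space, $d(x,y)=\|x-y\|$, with size notion $s(x)=\|x\|$. Then $\mathrm{AH}_d$ is a pseudo-metric on $\mathcal{P}(M)$ (reflexive, symmetric, and satisfying the triangle inequality).
   Context: For $X,Y\subseteq M$, \[ \overrightarrow{\mathrm{AH}}_{d}(X,Y)=\lim_{k\to\infty}\ \sup_{x\in X,\ \|x\|\ge k}\ \inf_{y\in Y} \|x-y\|,\qquad \mathrm{AH}_d(X,Y)=\max\{\overrightarrow{\mathrm{AH}}_{d}(X,Y),\overrightarrow{\mathrm{AH}}_{d}(Y,X)\}, \] with the supremum over the empty set equal to $0$ and values in $[0,+\infty]$ (the infimum over the empty set being $+\infty=\sup d$ when $M\neq\{0\}$). *)

From HB Require Import structures.
From mathcomp Require Import all_boot all_order all_algebra.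
From mathcomp Require Import all_classical all_reals all_analysis.
Set Implicit Arguments. Unset Strict Implicit. Unset Printing Implicit Defensive.
Import Order.TTheory GRing.Theory Num.Theory.
Import numFieldNormedType.Exports.
Local Open Scope classical_set_scope.
Local Open Scope ring_scope.
Local Open Scope ereal_scope.

Section AH.
Variables (R : realType) (M : normedModType R).

Definition dist_pt (x y : M) : \bar R := (`|x - y|)%:E.

(* inf_{y in Y} d(x,y); the infimum over the empty set is +oo *)
Definition dist_set (x : M) (Y : set M) : \bar R :=
  ereal_inf [set dist_pt x y | y in Y].

(* sup_{x in X, ||x|| >= k} inf_{y in Y} d(x,y), with sup over the empty set = 0 *)
Definition AH_tail (X Y : set M) (k : R) : \bar R :=
  ereal_sup ([set dist_set x Y | x in [set x | x \in X /\ (k <= `|x|)%R]]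
             `|` [set 0]).

Definition AH_dir (X Y : set M) : \bar R :=
  lim (AH_tail X Y k @[k --> +oo%R]).

Definition AH (X Y : set M) : \bar R := maxe (AH_dir X Y) (AH_dir Y X).

End AH.

From HB Require Import structures.
From mathcomp Require Import all_boot all_order all_algebra.
From mathcomp Require Import all_classical all_reals all_analysis.
Set Implicit Arguments. Unset Strict Implicit. Unset Printing Implicit Defensive.
Import Order.TTheory GRing.Theory Num.Theory.
Local Open Scope classical_set_scope.
Local Open Scope ereal_scope.

(* If every x in X with |x| >= k1 lies within a of Y and every
   y in Y with |y| >= k2 lies within b of Z, then every x in X with
   |x| >= max(k1, k2 + a) has some y in Y with |x - y| < a, so |y| > k2 and
   x lies within a + b of Z.  Since the tail suprema are nonincreasing in k,
   the directed distance is their infimum, and the estimate passes to it. *)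

Lemma lee_add_approx (R : realFieldType) (a b c : \bar R) :
  0 <= a -> 0 <= b ->
  (forall r s : R, a < r%:E -> b < s%:E -> c <= (r + s)%:E) -> c <= a + b.
Proof.
case: a => [a| |] // a0; case: b => [b| |] // b0 approx; rewrite ?leey //.
apply/lee_addgt0Pr => e e0; rewrite -EFinD.
have e20 : (0 < e / 2)%R by rewrite divr_gt0.
have -> : (a + b + e = (a + e / 2) + (b + e / 2))%R.
  by rewrite addrACA -splitr.
by apply: approx; rewrite lte_fin ltrDl.
Qed.

Section AsymptoticHausdorff.
Variables (R : realType) (M : normedModType R).
Implicit Types (X Y Z : set M) (x y z : M) (k r : R).

Lemma dist_set_le x Y y : Y y -> dist_set x Y <= (`|x - y|)%:E.
Proof. by move=> Yy; apply: ereal_inf_lbound; exists y. Qed.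

Lemma dist_set_ltP x Y r :
  dist_set x Y < r%:E -> exists2 y, Y y & (`|x - y| < r)%R.
Proof. by case/ereal_inf_lt => _ [y Yy <-]; rewrite lte_fin; exists y. Qed.

Lemma AH_tail_ge0 X Y k : 0 <= AH_tail X Y k.
Proof. by apply: ereal_sup_ubound; right. Qed.

Lemma dist_set_le_AH_tail X Y k x :
  X x -> (k <= `|x|)%R -> dist_set x Y <= AH_tail X Y k.
Proof.
move=> Xx kx; apply: ereal_sup_ubound; left.
by exists x => //; split; rewrite ?in_setE.
Qed.

Lemma AH_tail_nonincreasing X Y :
  {homo AH_tail X Y : k l / (k <= l)%R >-> l <= k}.
Proof.
move=> k l kl; apply: ereal_sup_le => _ [[x [Xx lx] <-]|->]; last by right.
by left; exists x => //; split => //; apply: le_trans lx.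
Qed.

Lemma AH_dirE X Y : AH_dir X Y = ereal_inf (range (AH_tail X Y)).
Proof.
apply: (cvg_lim (@ereal_hausdorff R)).
exact: nonincreasing_cvge (@AH_tail_nonincreasing X Y).
Qed.

Lemma AH_dir_ge0 X Y : 0 <= AH_dir X Y.
Proof. by rewrite AH_dirE; apply/ereal_infP => _ [k _ <-]; apply: AH_tail_ge0. Qed.

Lemma AH_dir_le_AH_tail X Y k : AH_dir X Y <= AH_tail X Y k.
Proof. by rewrite AH_dirE; apply: ereal_inf_lbound; exists k. Qed.

Lemma AH_dir_ltP X Y r :
  AH_dir X Y < r%:E -> exists k, AH_tail X Y k < r%:E.
Proof. by rewrite AH_dirE => /ereal_inf_lt [_ [k _ <-]]; exists k. Qed.

Lemma AH_dir_refl X : AH_dir X X = 0.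
Proof.
apply/eqP; rewrite eq_le AH_dir_ge0 andbT.
apply: le_trans (AH_dir_le_AH_tail X X 0%R) _.
apply/ereal_supP => _ [[x [Xx _] <-]|->] //.
rewrite in_setE in Xx; have := dist_set_le x Xx.
by rewrite subrr normr0.
Qed.

Lemma AH_tail_triangle X Y Z k1 k2 a b :
  AH_tail X Y k1 < a%:E -> AH_tail Y Z k2 < b%:E ->
  AH_tail X Z (Num.max k1 (k2 + a)%R) <= (a + b)%:E.
Proof.
move=> XYa YZb.
have a0 : (0 < a)%R by rewrite -lte_fin (le_lt_trans (AH_tail_ge0 _ _ _) XYa).
have b0 : (0 < b)%R by rewrite -lte_fin (le_lt_trans (AH_tail_ge0 _ _ _) YZb).
apply/ereal_supP => _ [[x [+ +] <-]|->]; last by rewrite lee_fin ltW ?addr_gt0.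
rewrite in_setE ge_max => Xx /andP[k1x k2ax].
have [y Yy xy] := dist_set_ltP (le_lt_trans (dist_set_le_AH_tail Y Xx k1x) XYa).
have k2y : (k2 <= `|y|)%R.
  rewrite -(lerD2r a); apply: le_trans k2ax _.
  by rewrite -lerBlDl (le_trans (lerB_dist x y)) ?ltW.
have [z Zz yz] := dist_set_ltP (le_lt_trans (dist_set_le_AH_tail Z Yy k2y) YZb).
apply: le_trans (dist_set_le x Zz) _; rewrite lee_fin -(subrK y x) -addrA.
by apply: le_trans (ler_normD _ _) _; rewrite ltW ?ltrD.
Qed.

Lemma AH_dir_triangle X Y Z : AH_dir X Z <= AH_dir X Y + AH_dir Y Z.
Proof.
apply: lee_add_approx; rewrite ?AH_dir_ge0 // => a b /AH_dir_ltP[k1 XYa].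
case/AH_dir_ltP => k2 YZb.
apply: le_trans (AH_dir_le_AH_tail X Z (Num.max k1 (k2 + a)%R)) _.
exact: AH_tail_triangle XYa YZb.
Qed.

End AsymptoticHausdorff.

Theorem mainTheorem4 (R : realType) (M : normedModType R) :
  (forall X : set M, AH X X = 0) /\
  (forall X Y : set M, AH X Y = AH Y X) /\
  (forall X Y Z : set M, AH X Z <= AH X Y + AH Y Z).
Proof.
split; [|split].
- by move=> X; rewrite /AH AH_dir_refl maxxx.
- by move=> X Y; rewrite /AH maxC.
- move=> X Y Z; rewrite /AH ge_max; apply/andP; split.
  + apply: le_trans (AH_dir_triangle X Y Z) _.
    by apply: leeD; rewrite le_max lexx ?orbT.
  + apply: le_trans (AH_dir_triangle Z Y X) _.
    by rewrite addeC; apply: leeD; rewrite le_max lexx ?orbT.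
Qed.
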